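(* Let $S\subset M$ be a saturated affine semigroup with $w(S)=S$ for all $w\in W$, and let $u\in D\cap S$. Writing $\Psi(\chi^u)=\sum_{v\in D\cap\Lambda}a_v\underline{\chi}^v$, every $v$ with $a_v\ne 0$ lies in $S$.
   Context: Setting: $V$ is a finite-dimensional real vector space with positive definite symmetric bilinear form $\langle\,,\rangle$; $M\subset V$ is a lattice; $W\subset\mathrm{GL}(V)$ is a finite group generated by reflections $s_\alpha(v)=v-2\frac{\langle v,\alpha\rangle}{\langle\alpha,\alpha\rangle}\alpha$ and preserving $M$; $\Delta=\{\alpha_1,\dots,\alpha_r\}\subset M$ is a simple system for $W$ (a linearly independent subset of a root system for $W$, spanning the same subspace, such that every root is a real combination of $\Delta$ with coefficients of one sign) chosen so that $M\subset\Lambda$, where $\Lambda=\{v\in V:2\frac{\langle v,\alpha_i\rangle}{\langle\alpha_i,\alpha_i\rangle}\in\mathbb{Z}\ \forall i\}$ is the weight group (such $\Delta$ exists, and $W$ preserves $\Lambda$). Let $Z=\bigcap_i\alpha_i^\perp$ and let $\lambda_1,\dots,\lambda_r\in Z^\perp$ be the fundamental weights, defined by $2\frac{\langle\lambda_i,\alpha_j\rangle}{\langle\alpha_j,\alpha_j\rangle}=\delta_{ij}$. Then $\Lambda=Z\oplus\Lambda_\circ$ with $\Lambda_\circ=\mathbb{Z}\langle\lambda_1,\dots,\lambda_r\rangle$, and the fundamental domain is $D=\{v:\langle v,\alpha_i\rangle\ge0\ \forall i\}=Z\times\mathbb{R}_{\ge0}\langle\lambda_1,\dots,\lambda_r\rangle$.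 A saturated affine semigroup is a finitely generated $\mathbb{Z}_{\ge0}$-submodule $S\subset M$ such that $km\in S$ with $k\in\mathbb{Z}_{>0}$, $m\in M$ implies $m\in S$. For a semigroup $S$, $\mathbb{Z}[S]$ is its semigroup ring with basis $\chi^s$, $\chi^s\chi^t=\chi^{s+t}$, and $W$ acts by $w\chi^s=\chi^{ws}$. $\Psi_\circ:\mathbb{Z}[D\cap\Lambda_\circ]\to\mathbb{Z}[\Lambda_\circ]^W$ is the ring homomorphism with $\Psi_\circ(\chi^{\lambda_i})=\sum_{v\in W\lambda_i}\chi^v$, and $\Psi:\mathbb{Z}[D\cap\Lambda]\to\mathbb{Z}[\Lambda]^W$ is its $\mathbb{Z}[Z]$-linear extension: for $u=z+u_\circ$ with $z\in Z$, $u_\circ\in D\cap\Lambda_\circ$, $\Psi(\chi^u)=\chi^z\Psi_\circ(\chi^{u_\circ})$. For $u\in D\cap\Lambda$, $\underline{\chi}^u:=\sum_{v\in Wu}\chi^v$; these form a $\mathbb{Z}$-basis of $\mathbb{Z}[\Lambda]^W$. *)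

(* V = 'rV[R]_n with R : realType (the real numbers),
   vectors are row vectors and matrices act on the right: w(v) := v *m w. *)
From HB Require Import structures.
From mathcomp Require Import all_boot all_order all_algebra.
From mathcomp Require Import reals.
Set Implicit Arguments. Unset Strict Implicit. Unset Printing Implicit Defensive.
Import Order.TTheory GRing.Theory Num.Theory.
Local Open Scope ring_scope.

Section Setting.
Variables (R : realType) (n : nat).
Notation vec := 'rV[R]_n.

Definition form (G : 'M[R]_n) (x y : vec) : R := (x *m G *m y^T) 0 0.

Definition pos_def_sym (G : 'M[R]_n) : Prop :=
  G^T = G /\ forall v : vec, v != 0 -> 0 < form G v v.

(* the reflection s_a : v |-> v - 2 <v,a>/<a,a> a, as a matrix acting on the right *)
Definition refl (G : 'M[R]_n) (a : vec) : 'M[R]_n :=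
  1%:M - (2 / form G a a) *: (G *m a^T *m a).

Definition prod_mx (ms : seq 'M[R]_n) : 'M[R]_n := foldr (@mulmx R n n n) 1%:M ms.

Definition inM (L : 'M[R]_n) (v : vec) : Prop :=
  exists m : 'rV[int]_n, v = map_mx (fun x : int => x%:~R) m *m L.

(* W (given by the finite list ws of its elements) is a finite group generated
   by reflections *)
Definition finite_refl_group (G : 'M[R]_n) (ws : seq 'M[R]_n) : Prop :=
  [/\ 1%:M \in ws,
      (forall w1 w2, w1 \in ws -> w2 \in ws -> w1 *m w2 \in ws),
      (forall w, w \in ws -> exists2 w', w' \in ws & w *m w' = 1%:M) &
      (forall w, w \in ws -> exists bs : seq vec,
          [/\ all (fun b => b != 0) bs, all (fun b => refl G b \in ws) bs &
              w = prod_mx [seq refl G b | b <- bs]])].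

Definition preserves (ws : seq 'M[R]_n) (P : vec -> Prop) : Prop :=
  forall w v, w \in ws -> P v -> P (v *m w).

(* phi is a root system for W (Humphreys' definition) *)
Definition root_system_for (G : 'M[R]_n) (ws : seq 'M[R]_n) (phi : seq vec) : Prop :=
  [/\ (forall b, b \in phi -> b != 0),
      (forall b (c : R), b \in phi -> (c *: b \in phi <-> (c = 1 \/ c = -1))),
      (forall b c, b \in phi -> c \in phi -> c *m refl G b \in phi),
      (forall b, b \in phi -> refl G b \in ws) &
      (forall w, w \in ws -> exists2 bs : seq vec, all (fun b => b \in phi) bs &
              w = prod_mx [seq refl G b | b <- bs])].

Definition simple_system (r : nat) (phi : seq vec) (alpha : 'I_r -> vec) : Prop :=
  [/\ (forall i, alpha i \in phi),
      (forall c : 'I_r -> R, \sum_i c i *: alpha i = 0 -> forall i, c i = 0) &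
      (forall b, b \in phi -> exists c : 'I_r -> R,
          b = \sum_i c i *: alpha i /\
          ((forall i, 0 <= c i) \/ (forall i, c i <= 0)))].

Definition inLambda (G : 'M[R]_n) (r : nat) (alpha : 'I_r -> vec) (v : vec) : Prop :=
  forall i, exists c : int, 2 * form G v (alpha i) / form G (alpha i) (alpha i) = c%:~R.

Definition inZ (G : 'M[R]_n) (r : nat) (alpha : 'I_r -> vec) (v : vec) : Prop :=
  forall i, form G v (alpha i) = 0.

Definition inD (G : 'M[R]_n) (r : nat) (alpha : 'I_r -> vec) (v : vec) : Prop :=
  forall i, 0 <= form G v (alpha i).

Definition fund_weights (G : 'M[R]_n) (r : nat) (alpha lambda : 'I_r -> vec) : Prop :=
  (forall i j, 2 * form G (lambda i) (alpha j) / form G (alpha j) (alpha j)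
               = (i == j)%:R) /\
  (forall i y, inZ G alpha y -> form G (lambda i) y = 0).

Definition saturated_affine_semigroup (L : 'M[R]_n) (S : vec -> Prop) : Prop :=
  (exists gs : seq vec, (forall g, g \in gs -> inM L g) /\
     (forall v, S v <-> exists c : 'I_(size gs) -> nat,
                          v = \sum_(j < size gs) (c j)%:R *: gs`_j)) /\
  (forall (k : nat) m, (0 < k)%N -> inM L m -> S (k%:R *: m) -> S m).

Definition W_stable (ws : seq 'M[R]_n) (S : vec -> Prop) : Prop :=
  forall w, w \in ws ->
    (forall s, S s -> S (s *m w)) /\ (forall s, S s -> exists2 t, S t & s = t *m w).

(* group ring Z[V]: formal finite sums  sum c chi^x, given as lists of (c, x) *)
Definition gring := seq (int * vec).
Definition coef (f : gring) (v : vec) : int := \sum_(p <- f | p.2 == v) p.1.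
Definition chi (x : vec) : gring := [:: (1%:Z, x)].
Definition gone : gring := chi 0.
Definition gmul (f g : gring) : gring :=
  [seq (p.1 * q.1, p.2 + q.2) | p <- f, q <- g].
Definition gexp (f : gring) (k : nat) : gring := iter k (gmul f) gone.

Definition orbsum (ws : seq 'M[R]_n) (v : vec) : gring :=
  [seq (1%:Z, x) | x <- undup [seq v *m w | w <- ws]].

(* Psi_o(chi^{sum k_i lambda_i}) = prod_i Psi_o(chi^{lambda_i})^{k_i}, and
   Psi(chi^{z + u_o}) = chi^z Psi_o(chi^{u_o}) *)
Definition Psi_circ (ws : seq 'M[R]_n) (r : nat) (lambda : 'I_r -> vec)
  (k : 'I_r -> nat) : gring :=
  foldr gmul gone [seq gexp (orbsum ws (lambda i)) (k i) | i <- enum 'I_r].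
Definition Psi (ws : seq 'M[R]_n) (r : nat) (lambda : 'I_r -> vec) (z : vec)
  (k : 'I_r -> nat) : gring := gmul (chi z) (Psi_circ ws lambda k).

End Setting.

From Pilot Require Import Defs.
From HB Require Import structures.
From mathcomp Require Import all_boot all_order all_algebra.
From mathcomp Require Import reals.
From mathcomp Require Import ring.
(* Write u = z + sum_t lambda_(i_t).  Every point of the support of Psi(chi^u)
   has the form u' = z + sum_t lambda_(i_t) w_t with w_t in W.  Such a u' lies
   in the rational convex hull of the orbit W u: for dominant weights lam and
   mu, lam + mu w is a convex combination of W-translates of lam + mu, as one
   sees by reflecting mu w towards the dominant chamber one simple root at a
   time.  Moreover u' - u lies in the root lattice, hence in M, so u' is in S
   because S is W-stable and saturated.  Finally a dominant v with a_v <> 0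
   occurs in the support: v is the only dominant point of its W-orbit, so the
   coefficient of chi^v in Psi(chi^u) is a_v. *)

Set Implicit Arguments. Unset Strict Implicit. Unset Printing Implicit Defensive.
Import Order.TTheory GRing.Theory Num.Theory.
Local Open Scope ring_scope.

Lemma count_lt_sub (T : eqType) (P Q : pred T) (s : seq T) x :
  subpred P Q -> x \in s -> Q x -> ~~ P x -> (count P s < count Q s)%N.
Proof.
move=> PQ; elim: s => [|y s IH] //= /[swap] Qx /[swap] nPx.
rewrite in_cons => /orP [/eqP <-|xs].
  by rewrite Qx (negPf nPx) add0n add1n ltnS; apply: sub_count.
rewrite -addnS; apply: leq_add; last exact: IH.
by have := PQ y; case: (P y) => [-> //|_].
Qed.

Section Form.
Variables (R : realType) (n : nat) (G : 'M[R]_n).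
Local Notation vec := 'rV[R]_n.
Local Notation fm := (Defs.form G).

Lemma bformDl (x y z : vec) : fm (x + y) z = fm x z + fm y z.
Proof. by rewrite /Defs.form !mulmxDl mxE. Qed.
Lemma bformZl c (x z : vec) : fm (c *: x) z = c * fm x z.
Proof. by rewrite /Defs.form -!scalemxAl mxE. Qed.
Lemma bformDr (x y z : vec) : fm z (x + y) = fm z x + fm z y.
Proof. by rewrite /Defs.form linearD /= mulmxDr mxE. Qed.
Lemma bformZr c (x z : vec) : fm z (c *: x) = c * fm z x.
Proof. by rewrite /Defs.form linearZ /= -scalemxAr mxE. Qed.
Lemma bformNl (x z : vec) : fm (- x) z = - fm x z.
Proof. by rewrite -scaleN1r bformZl mulN1r. Qed.
Lemma bformNr (x z : vec) : fm z (- x) = - fm z x.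
Proof. by rewrite -scaleN1r bformZr mulN1r. Qed.
Lemma bformBl (x y z : vec) : fm (x - y) z = fm x z - fm y z.
Proof. by rewrite bformDl bformNl. Qed.
Lemma bformBr (x y z : vec) : fm z (x - y) = fm z x - fm z y.
Proof. by rewrite bformDr bformNr. Qed.
Lemma bform0l (z : vec) : fm 0 z = 0.
Proof. by rewrite -(scale0r 0) bformZl mul0r. Qed.
Lemma bform0r (z : vec) : fm z 0 = 0.
Proof. by rewrite -(scale0r 0) bformZr mul0r. Qed.
Lemma bform_sumr I (s : seq I) (P : pred I) (F : I -> vec) z :
  fm z (\sum_(i <- s | P i) F i) = \sum_(i <- s | P i) fm z (F i).
Proof. by elim/big_rec2: _ => [|i y1 y2 _ <-]; rewrite ?bform0r ?bformDr. Qed.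

Lemma refl_act (x a : vec) : x *m refl G a = x - (2 / fm a a * fm x a) *: a.
Proof.
rewrite /refl mulmxBr mulmx1 -scalemxAr !mulmxA.
by rewrite [x *m G *m a^T]mx11_scalar mul_scalar_mx scalerA.
Qed.

Lemma reflN (a : vec) : refl G (- a) = refl G a.
Proof.
have trN : (- a)^T = - a^T by apply/matrixP => i j; rewrite !mxE.
by rewrite /refl bformNl bformNr opprK mulmxN trN mulmxN mulNmx opprK.
Qed.

Hypothesis Gsym : G^T = G.

Lemma bformC (x y : vec) : fm x y = fm y x.
Proof.
rewrite /Defs.form -[in LHS](trmxK (x *m G *m y^T)) [in LHS]mxE.
by rewrite !trmx_mul trmxK Gsym mulmxA.
Qed.

Definition isometry_mx (v : 'M[R]_n) := forall x y : vec, fm (x *m v) (y *m v) = fm x y.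

Section Reflection.
Variable a : vec.
Hypothesis a_anisotropic : fm a a != 0.

Lemma refl_isometry : isometry_mx (refl G a).
Proof. by move=> x y; rewrite !refl_act bformBl !bformBr !bformZl !bformZr (bformC a y); field. Qed.

Lemma reflK (x : vec) : x *m refl G a *m refl G a = x.
Proof.
rewrite [LHS]refl_act [in X in _ - X]refl_act bformBl bformZl.
have -> : 2 / fm a a * (fm x a - 2 / fm a a * fm x a * fm a a) = - (2 / fm a a * fm x a).
  by field.
by rewrite scaleNr opprK refl_act subrK.
Qed.

End Reflection.

Lemma refl_conj (a : vec) (v : 'M[R]_n) : isometry_mx v ->
  refl G a *m v = v *m refl G (a *m v).
Proof.
move=> v_iso; apply/eqP/mulmxP => x.
by rewrite !mulmxA !refl_act !v_iso mulmxBl -scalemxAl.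
Qed.

End Form.

Section GroupRing.
Variables (R : realType) (n : nat).
Local Notation vec := 'rV[R]_n.

Lemma coef_indicator (s : seq vec) x : uniq s ->
  coef [seq (1%:Z, y) | y <- s] x = (x \in s)%:R.
Proof.
rewrite /coef big_map; elim: s => [|y s IH] /=; first by rewrite big_nil.
move=> /andP [y_s s_uniq]; rewrite big_cons in_cons IH //.
by case: (eqVneq y x) => [<-|] /=; rewrite ?(negPf y_s) ?addr0.
Qed.

Lemma coef_orbsum (ws : seq 'M[R]_n) (v x : vec) :
  coef (orbsum ws v) x = (x \in [seq v *m w | w <- ws])%:R.
Proof. by rewrite coef_indicator ?undup_uniq // mem_undup. Qed.

Lemma coef_neq0_mem (f : gring R n) x : coef f x != 0 -> exists2 p, p \in f & p.2 = x.
Proof.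
move=> f_x; have /hasP [p p_f /eqP] : has (fun p : int * vec => p.2 == x) f.
  by apply: contraNT f_x => no_p; rewrite /coef big_hasC.
by exists p.
Qed.

End GroupRing.

Section DominantSupport.
Variables (R : realType) (n r : nat) (G : 'M[R]_n) (ws : seq 'M[R]_n)
  (phi : seq 'rV[R]_n) (alpha : 'I_r -> 'rV[R]_n).
Local Notation vec := 'rV[R]_n.
Local Notation fm := (Defs.form G).
Hypotheses (Gsym : G^T = G) (Gpos : forall v : vec, v != 0 -> 0 < fm v v)
  (RS : root_system_for G ws phi) (SS : simple_system phi alpha).

Lemma root_form_gt0 b : b \in phi -> 0 < fm b b.
Proof. by case: RS => root_neq0 _ _ _ _ /root_neq0 /Gpos. Qed.
Lemma root_form_neq0 b : b \in phi -> fm b b != 0.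
Proof. by move/root_form_gt0; rewrite lt0r => /andP[]. Qed.
Lemma simple_root i : alpha i \in phi.
Proof. by case: SS. Qed.
Lemma root_refl b c : b \in phi -> c \in phi -> c *m refl G b \in phi.
Proof. by case: RS => _ _ + _ _; apply. Qed.
Lemma rootN b : b \in phi -> - b \in phi.
Proof. by case: RS => _ rootZ _ _ _ b_root; rewrite -scaleN1r (rootZ _ _ b_root); right. Qed.

(** * Simple reflections and the Weyl group *)

Definition srefl i := refl G (alpha i).
Definition word (l : seq 'I_r) := prod_mx [seq srefl i | i <- l].

Lemma word_cons i l : word (i :: l) = srefl i *m word l. Proof. by []. Qed.
Lemma word_cat l1 l2 : word (l1 ++ l2) = word l1 *m word l2.
Proof. by elim: l1 => [|i l IH] /=; rewrite ?mul1mx // word_cons IH mulmxA. Qed.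
Lemma word_rcons l i : word (rcons l i) = word l *m srefl i.
Proof. by rewrite -cats1 word_cat word_cons mulmx1. Qed.

Lemma sreflK (x : vec) i : x *m srefl i *m srefl i = x.
Proof. exact/reflK/root_form_neq0/simple_root. Qed.
Lemma srefl_invol i : srefl i *m srefl i = 1%:M.
Proof. by apply/eqP/mulmxP => x; rewrite mulmxA mulmx1 sreflK. Qed.
Lemma word_revK l : word (rev l) *m word l = 1%:M.
Proof.
elim: l => [|i l IH]; first by rewrite mulmx1.
by rewrite rev_cons word_rcons word_cons mulmxA -(mulmxA (word _)) srefl_invol mulmx1.
Qed.

Lemma srefl_isometry i : isometry_mx G (srefl i).
Proof. exact/refl_isometry/root_form_neq0/simple_root. Qed.
Lemma word_isometry l : isometry_mx G (word l).
Proof.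
elim: l => [|i l IH] x y; first by rewrite !mulmx1.
by rewrite word_cons !mulmxA IH srefl_isometry.
Qed.
Lemma root_word b l : b \in phi -> b *m word l \in phi.
Proof.
elim: l b => [|i l IH] b b_root; first by rewrite mulmx1.
by rewrite word_cons mulmxA IH ?root_refl ?simple_root.
Qed.

Definition positive (b : vec) := exists c : 'I_r -> R,
  b = \sum_i c i *: alpha i /\ forall i, 0 <= c i.
Definition negative (b : vec) := exists c : 'I_r -> R,
  b = \sum_i c i *: alpha i /\ forall i, c i <= 0.

Lemma simple_coord_inj (c d : 'I_r -> R) :
  \sum_i c i *: alpha i = \sum_i d i *: alpha i -> forall i, c i = d i.
Proof.
move=> e i; apply/eqP; rewrite -subr_eq0; apply/eqP.
case: SS => _ free _; apply: (free (fun i => c i - d i)).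
by under eq_bigr do rewrite scalerBl; rewrite sumrB e subrr.
Qed.

Lemma root_pos_or_neg b : b \in phi -> positive b \/ negative b.
Proof.
by case: SS => _ _ coords /coords [c [-> [c_ge0|c_le0]]]; [left|right]; exists c.
Qed.

Lemma root_not_pos_neg b : b \in phi -> positive b -> negative b -> False.
Proof.
move=> b_root [c [eb c_ge0]] [d [eb' d_le0]].
have cd := simple_coord_inj (etrans (esym eb) eb').
have c0 i : c i = 0 by apply/eqP; rewrite eq_le c_ge0 andbT cd d_le0.
have b0 : b = 0 by rewrite eb big1 // => i _; rewrite c0 scale0r.
by move: (root_form_neq0 b_root); rewrite b0 bform0l eqxx.
Qed.

Lemma positiveN b : positive b -> negative (- b).
Proof.
move=> [c [-> c_ge0]]; exists (fun i => - c i); split => [|i]; last by rewrite oppr_le0.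
by rewrite -sumrN; apply: eq_bigr => i _; rewrite scaleNr.
Qed.
Lemma negativeN b : negative b -> positive (- b).
Proof.
move=> [c [-> c_le0]]; exists (fun i => - c i); split => [|i]; last by rewrite oppr_ge0.
by rewrite -sumrN; apply: eq_bigr => i _; rewrite scaleNr.
Qed.

Lemma sum_delta_simple j (t : R) : \sum_i ((i == j)%:R * t) *: alpha i = t *: alpha j.
Proof.
rewrite (bigD1 j) //= eqxx mul1r big1 ?addr0 // => i /negPf ->.
by rewrite mul0r scale0r.
Qed.

Lemma simple_positive i : positive (alpha i).
Proof.
exists (fun k => (k == i)%:R); split => [|k]; last by rewrite ler0n.
rewrite (bigD1 i) //= eqxx scale1r big1 ?addr0 // => k /negPf ->.
by rewrite scale0r.
Qed.

Lemma srefl_simple j : alpha j *m srefl j = - alpha j.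
Proof.
rewrite /srefl refl_act divfK ?root_form_neq0 ?simple_root //.
by rewrite scaler_nat mulr2n opprD addrA subrr add0r.
Qed.

Lemma srefl_positive b j : b \in phi -> positive b -> b != alpha j ->
  positive (b *m srefl j).
Proof.
move=> b_root [c [eb c_ge0]] b_neq.
have bs_root : b *m srefl j \in phi by rewrite root_refl ?simple_root.
case: (root_pos_or_neg bs_root) => // -[e [ebs e_le0]].
set t := 2 / fm (alpha j) (alpha j) * fm b (alpha j).
have ebs' : b *m srefl j = \sum_i (c i - (i == j)%:R * t) *: alpha i.
  by under eq_bigr do rewrite scalerBl; rewrite sumrB sum_delta_simple -eb /srefl refl_act.
have ce := simple_coord_inj (etrans (esym ebs) ebs').
have c0 i : i != j -> c i = 0.
  move=> /negPf ij; apply/eqP; rewrite eq_le c_ge0 andbT.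
  by move: (e_le0 i); rewrite ce ij mul0r subr0.
have eb_j : b = c j *: alpha j.
  by rewrite eb (bigD1 j) //= big1 ?addr0 // => i /c0 ->; rewrite scale0r.
case: RS => _ rootZ _ _ _.
have /(rootZ _ _ (simple_root j)) [c1|cm1] : c j *: alpha j \in phi by rewrite -eb_j.
  by move: b_neq; rewrite eb_j c1 scale1r eqxx.
by move: (c_ge0 j); rewrite cm1 oppr_ge0 ler10.
Qed.

(* A form of the exchange condition. *)
Lemma refl_word_shorter l b : b \in phi -> positive b -> negative (b *m word l) ->
  exists2 l', (size l' < size l)%N & refl G b *m word l = word l'.
Proof.
elim: l b => [|j l IH] b b_root b_pos b_neg.
  by exfalso; apply: (root_not_pos_neg b_root b_pos); rewrite mulmx1 in b_neg.
case: (eqVneq b (alpha j)) => [->|b_neq].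
  by exists l => //; rewrite word_cons mulmxA -/(srefl j) srefl_invol mul1mx.
have bs_root : b *m srefl j \in phi by rewrite root_refl ?simple_root.
move: b_neg; rewrite word_cons mulmxA => /(IH _ bs_root (srefl_positive b_root b_pos b_neq)).
case=> l' size_l' el'; exists (j :: l') => //.
rewrite word_cons mulmxA refl_conj; last exact: srefl_isometry.
by rewrite -mulmxA el'.
Qed.

(* Induction on the length of the word: either some simple root alpha_i is sent
   to a negative root, so that x is orthogonal to alpha_i and the exchange
   condition shortens the word, or the first letter can be cancelled. *)
Lemma dominant_word_fixed (x : vec) l : inD G alpha x -> inD G alpha (x *m word l) ->
  x *m word l = x.
Proof.
move=> x_dom; have [m] := ubnP (size l); elim: m l => // m IHm l /ltnSE size_l xl_dom.
have shorter l' : (size l' < size l)%N -> x *m word l = x *m word l' -> x *m word l = x.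
  move=> size_l' e; rewrite e; apply: IHm; [exact: leq_trans size_l | by rewrite -e].
have neg_case i : negative (alpha i *m word l) -> x *m word l = x.
  move=> ai_neg; have [l' size_l' el'] := refl_word_shorter (simple_root i) (simple_positive i) ai_neg.
  have xi0 : fm x (alpha i) = 0.
    apply/eqP; rewrite eq_le x_dom andbT -(word_isometry l).
    case: ai_neg => [d [-> d_le0]]; rewrite bform_sumr sumr_le0 // => k _.
    by rewrite bformZr mulr_le0_ge0.
  apply: (shorter l' size_l').
  by rewrite -el' mulmxA -/(srefl i) /srefl refl_act xi0 mulr0 scale0r subr0.
case: l size_l xl_dom shorter neg_case => [|j l0] size_l xl_dom shorter neg_case.
  by rewrite mulmx1.
case: (root_pos_or_neg (root_word l0 (simple_root j))) => [aj_pos|aj_neg].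
  by apply: (neg_case j); rewrite word_cons mulmxA srefl_simple mulNmx; apply: positiveN.
have [l' size_l' el'] := refl_word_shorter (simple_root j) (simple_positive j) aj_neg.
by apply: (shorter l'); [rewrite /= ltnS ltnW | rewrite word_cons -el'].
Qed.

Variable lambda : 'I_r -> vec.
Hypothesis FW : fund_weights G alpha lambda.

Lemma fund_form_simple j i :
  fm (lambda j) (alpha i) = (j == i)%:R * fm (alpha i) (alpha i) / 2.
Proof. by rewrite -(FW.1 j i); field; exact: root_form_neq0 (simple_root i). Qed.

Definition rho := \sum_j lambda j.

Lemma simple_form_rho_gt0 i : 0 < fm (alpha i) rho.
Proof.
rewrite bform_sumr (bigD1 i) //= big1 => [|j /negPf ji].
  by rewrite addr0 bformC // fund_form_simple eqxx mul1r divr_gt0 ?root_form_gt0 ?simple_root.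
by rewrite bformC // fund_form_simple ji !mul0r.
Qed.

Lemma srefl_form_rho (x : vec) i : fm (x *m srefl i) rho =
  fm x rho - 2 / fm (alpha i) (alpha i) * fm x (alpha i) * fm (alpha i) rho.
Proof. by rewrite /srefl refl_act bformBl bformZl. Qed.

(* Descend along the height [fm _ rho]: a positive non-simple root b has some
   [fm b (alpha i) > 0], and then [b *m srefl i] is a lower positive root. *)
Lemma pos_root_conj_simple b : b \in phi -> positive b ->
  exists i l, b = alpha i *m word l.
Proof.
pose ht x := fm x rho.
have [m] := ubnP (count (fun g => ht g < ht b) phi).
elim: m b => // m IHm b /ltnSE count_b b_root b_pos.
have [i bi_gt0] : exists i, 0 < fm b (alpha i).
  case: (boolP [exists i, 0 < fm b (alpha i)]) => [/existsP //|/existsPn b_le0].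
  case: b_pos => c [eb c_ge0]; have := root_form_gt0 b_root.
  rewrite {2}eb bform_sumr ltNge sumr_le0 // => i _.
  by rewrite bformZr mulr_ge0_le0 // leNgt b_le0.
case: (eqVneq b (alpha i)) => [->|b_neq]; first by exists i, [::]; rewrite mulmx1.
have bs_root : b *m srefl i \in phi by rewrite root_refl ?simple_root.
have ht_lt : ht (b *m srefl i) < ht b.
  rewrite /ht srefl_form_rho ltrBlDr ltrDl.
  by rewrite !mulr_gt0 ?invr_gt0 ?ltr0n ?root_form_gt0 ?simple_root ?simple_form_rho_gt0.
have [|j [l el]] := IHm _ _ bs_root (srefl_positive b_root b_pos b_neq).
  apply: leq_trans count_b; apply: (count_lt_sub (x := b *m srefl i)) => //=.
    by move=> g /lt_trans; apply.
  by rewrite ltxx.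
by exists j, (rcons l i); rewrite word_rcons mulmxA -el sreflK.
Qed.

Lemma refl_simple_word i l : refl G (alpha i *m word l) = word (rev l ++ i :: l).
Proof.
rewrite word_cat word_cons -(mul1mx (refl _ _)) -(word_revK l) -!mulmxA.
by rewrite -refl_conj //; apply: word_isometry.
Qed.

Lemma refl_root_word b : b \in phi -> exists l, refl G b = word l.
Proof.
move=> b_root; have [b_pos|b_neg] := root_pos_or_neg b_root.
  have [i [l ->]] := pos_root_conj_simple b_root b_pos.
  by exists (rev l ++ i :: l); rewrite refl_simple_word.
have [i [l el]] := pos_root_conj_simple (rootN b_root) (negativeN b_neg).
by exists (rev l ++ i :: l); rewrite -reflN el refl_simple_word.
Qed.

Lemma weyl_word w : w \in ws -> exists l, w = word l.
Proof.
case: RS => _ _ _ _ /[apply] -[bs + ->].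
elim: bs => [|b bs IH] /=; first by exists [::].
move=> /andP [/refl_root_word [l1 e1] /IH [l2 e2]].
by exists (l1 ++ l2); rewrite word_cat -e1 -e2.
Qed.

Lemma dominant_orbit_fixed (x : vec) w : w \in ws ->
  inD G alpha x -> inD G alpha (x *m w) -> x *m w = x.
Proof. by move=> /weyl_word [l ->]; apply: dominant_word_fixed. Qed.

Hypothesis FG : finite_refl_group G ws.

Lemma weyl1 : 1%:M \in ws. Proof. by case: FG. Qed.
Lemma weylM w1 w2 : w1 \in ws -> w2 \in ws -> w1 *m w2 \in ws.
Proof. by case: FG => _ + _ _; apply. Qed.
Lemma weylV w : w \in ws -> exists2 w', w' \in ws & w' *m w = 1%:M /\ w *m w' = 1%:M.
Proof. by case: FG => _ _ + _ => /[apply] -[w' w'_weyl /[dup] /mulmx1C]; exists w'. Qed.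
Lemma srefl_weyl i : srefl i \in ws.
Proof. by case: RS => _ _ _ + _; apply; apply: simple_root. Qed.

Variables (L : 'M[R]_n) (S : vec -> Prop).
Hypotheses (simple_lattice : forall i, inM L (alpha i))
  (lattice_weight : forall m, inM L m -> inLambda G alpha m)
  (S_saturated : saturated_affine_semigroup L S) (S_stable : W_stable ws S).

(** * Weights and lattices *)

Lemma weight_srefl (x : vec) j : inLambda G alpha x -> inLambda G alpha (x *m srefl j).
Proof.
move=> x_weight i.
have [[c ec] [d ed]] := (x_weight i, x_weight j).
have [e ee] := lattice_weight (simple_lattice j) i.
exists (c - d * e).
rewrite /srefl refl_act bformBl bformZl rmorphB rmorphM /= -ec -ed -ee.
by field; rewrite !root_form_neq0 ?simple_root.
Qed.
Lemma weight_weyl (x : vec) w : w \in ws -> inLambda G alpha x -> inLambda G alpha (x *m w).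
Proof.
move=> /weyl_word [l ->]; elim: l x => [|j l IH] x x_weight; first by rewrite mulmx1.
by rewrite word_cons mulmxA; apply/IH/weight_srefl.
Qed.
Lemma weightD x y : inLambda G alpha x -> inLambda G alpha y -> inLambda G alpha (x + y).
Proof.
move=> x_weight y_weight i; have [[c ec] [d ed]] := (x_weight i, y_weight i).
by exists (c + d); rewrite bformDl rmorphD /= -ec -ed mulrDr mulrDl.
Qed.
Lemma weight_fund i : inLambda G alpha (lambda i).
Proof. by move=> j; exists (i == j)%:Z; rewrite (FW.1 i j); case: (i == j). Qed.
Lemma dominant_fund i : inD G alpha (lambda i).
Proof.
move=> j; rewrite fund_form_simple divr_ge0 ?mulr_ge0 //.
exact/ltW/root_form_gt0/simple_root.
Qed.

Lemma dominant_weight_fund_sum (z : vec) (T : seq ('I_r * 'M[R]_n)) : inZ G alpha z ->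
  inD G alpha (z + \sum_(t <- T) lambda t.1) /\ inLambda G alpha (z + \sum_(t <- T) lambda t.1).
Proof.
move=> z_center; elim: T => [|t T [IHD IHL]]; rewrite ?big_nil ?addr0.
  by split=> i; [rewrite z_center | exists 0; rewrite z_center mulr0 mul0r].
rewrite big_cons addrCA; split; first by move=> i; rewrite bformDl addr_ge0 ?dominant_fund.
exact/weightD/IHL/weight_fund.
Qed.

Definition root_lattice (x : vec) := exists c : 'I_r -> int, x = \sum_i (c i)%:~R *: alpha i.

Lemma root_latticeD x y : root_lattice x -> root_lattice y -> root_lattice (x + y).
Proof.
move=> [c ->] [d ->]; exists (fun i => c i + d i); rewrite -big_split /=.
by apply: eq_bigr => i _; rewrite rmorphD scalerDl.
Qed.

Lemma root_lattice_weyl (x : vec) w : w \in ws -> inLambda G alpha x ->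
  root_lattice (x *m w - x).
Proof.
move=> /weyl_word [l ->]; elim: l x => [|j l IH] x x_weight.
  by rewrite mulmx1 subrr; exists (fun _ => 0); rewrite big1 // => i _; rewrite scale0r.
rewrite word_cons mulmxA -[_ - x](subrKA (x *m srefl j)).
apply: root_latticeD; first exact/IH/weight_srefl.
have [d ed] := x_weight j.
exists (fun i => if i == j then - d else 0).
rewrite (bigD1 j) //= eqxx big1 ?addr0 => [|i /negPf ->]; last by rewrite scale0r.
rewrite /srefl refl_act addrC addKr mulrNz scaleNr -ed; congr (- (_ *: _)).
by field; exact: root_form_neq0 (simple_root j).
Qed.

Lemma inMD x y : inM L x -> inM L y -> inM L (x + y).
Proof.
move=> [a ->] [b ->]; exists (a + b).
by rewrite -mulmxDl; congr (_ *m _); apply/matrixP => i j; rewrite !mxE intrD.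
Qed.
Lemma inMZ (e : int) x : inM L x -> inM L (e%:~R *: x).
Proof.
move=> [a ->]; exists (e *: a).
by rewrite scalemxAl; congr (_ *m _); apply/matrixP => i j; rewrite !mxE intrM.
Qed.
Lemma inM_sum (I : eqType) (s : seq I) (F : I -> vec) : (forall i, i \in s -> inM L (F i)) ->
  inM L (\sum_(i <- s) F i).
Proof.
move=> F_lattice; rewrite big_seq; elim/big_ind: _ => //; last exact: inMD.
by exists 0; rewrite (_ : map_mx _ 0 = 0) ?mul0mx //; apply/matrixP => i j; rewrite !mxE.
Qed.
Lemma root_lattice_sub x : root_lattice x -> inM L x.
Proof. by move=> [c ->]; apply: inM_sum => i _; apply: inMZ. Qed.

Lemma S_generators : exists gs : seq vec, (forall g, g \in gs -> inM L g) /\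
  (forall v, S v <-> exists c : 'I_(size gs) -> nat, v = \sum_(j < size gs) (c j)%:R *: gs`_j).
Proof. by case: S_saturated. Qed.
Lemma S0 : S 0.
Proof.
have [gs [_ ->]] := S_generators; exists (fun _ => 0%N).
by rewrite big1 // => j _; rewrite scale0r.
Qed.
Lemma SD x y : S x -> S y -> S (x + y).
Proof.
have [gs [_ S_gen]] := S_generators; move=> /S_gen [c ->] /S_gen [d ->].
apply/S_gen; exists (fun j => c j + d j)%N.
by rewrite -big_split; apply: eq_bigr => j _; rewrite natrD scalerDl.
Qed.
Lemma S_natmul (k : nat) x : S x -> S (k%:R *: x).
Proof.
have [gs [_ S_gen]] := S_generators; move=> /S_gen [c ->].
apply/S_gen; exists (fun j => k * c j)%N.
by rewrite scaler_sumr; apply: eq_bigr => j _; rewrite natrM scalerA.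
Qed.
Lemma S_lattice x : S x -> inM L x.
Proof.
have [gs [gs_lattice S_gen]] := S_generators; move=> /S_gen [c ->].
apply: inM_sum => j _; rewrite -[(c j)%:R]/((c j)%:Z%:~R); apply/inMZ/gs_lattice/mem_nth.
by rewrite ltn_ord.
Qed.

(** * Rational convex hulls of orbits *)

(* The rational convex hull of the orbit [W U], with the rational weights
   written as natural numbers over their common denominator. *)
Definition in_hull (U x : vec) := exists l : seq (nat * 'M[R]_n),
  [/\ all (fun p => p.2 \in ws) l, (0 < \sum_(p <- l) p.1)%N &
      (\sum_(p <- l) p.1)%:R *: x = \sum_(p <- l) (p.1)%:R *: (U *m p.2)].

Lemma hull_saturated U x : S U -> in_hull U x -> inM L x -> S x.
Proof.
move=> SU [l [l_weyl N_gt0 ex]] x_lattice.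
case: S_saturated => _ /(_ _ _ N_gt0 x_lattice); apply; rewrite ex big_seq.
elim/big_ind: _ => [|x1 x2|p p_l]; [exact: S0 | exact: SD |].
by apply: S_natmul; case: (S_stable (allP l_weyl p p_l)) => + _; apply.
Qed.

Lemma hull_self U : in_hull U U.
Proof. by exists [:: (1%N, 1%:M)]; rewrite /= weyl1 !big_seq1 mulmx1. Qed.

Lemma hull_weyl U x w : w \in ws -> in_hull U x -> in_hull U (x *m w).
Proof.
move=> w_weyl [l [l_weyl N_gt0 ex]]; exists [seq (p.1, p.2 *m w) | p <- l].
rewrite !big_map /= scalemxAl ex mulmx_suml; split => //.
  by rewrite all_map; apply/allP => p /(allP l_weyl) /weylM; apply.
by apply: eq_bigr => p _; rewrite -scalemxAl mulmxA.
Qed.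

Lemma hull_convex2 U x p q (a c : nat) : in_hull U p -> in_hull U q -> (0 < a + c)%N ->
  (a + c)%:R *: x = a%:R *: p + c%:R *: q -> in_hull U x.
Proof.
move=> [lp [lp_weyl Np_gt0 ep]] [lq [lq_weyl Nq_gt0 eq]] ac_gt0 ex.
set Np := (\sum_(t <- lp) t.1)%N in Np_gt0 ep.
set Nq := (\sum_(t <- lq) t.1)%N in Nq_gt0 eq.
exists ([seq (a * Nq * t.1, t.2)%N | t <- lp] ++ [seq (c * Np * t.1, t.2)%N | t <- lq]).
have N_eq : (\sum_(t <- [seq (a * Nq * t.1, t.2)%N | t <- lp] ++
              [seq (c * Np * t.1, t.2)%N | t <- lq]) t.1 = (a + c) * (Np * Nq))%N.
  rewrite big_cat !big_map /= -!big_distrr /= -/Np -/Nq.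
  by rewrite mulnDl -!mulnA [(Nq * Np)%N]mulnC.
rewrite N_eq !muln_gt0 ac_gt0 Np_gt0 Nq_gt0 all_cat !all_map; split => //.
  by apply/andP; split; apply/allP => t t_l /=; [apply: (allP lp_weyl) | apply: (allP lq_weyl)].
have sum_scaled (l : seq (nat * 'M[R]_n)) (e : nat) :
    \sum_(t <- l) (e * t.1)%:R *: (U *m t.2) = e%:R *: \sum_(t <- l) t.1%:R *: (U *m t.2).
  by rewrite scaler_sumr; apply: eq_bigr => t _; rewrite scalerA natrM.
rewrite big_cat !big_map /= !sum_scaled -ep -eq natrM mulrC -scalerA ex.
by apply/rowP => j; rewrite !mxE !natrM; ring.
Qed.

Lemma hull_convex U x (ys : seq (nat * vec)) : (forall y, y \in ys -> in_hull U y.2) ->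
  (0 < \sum_(y <- ys) y.1)%N ->
  (\sum_(y <- ys) y.1)%:R *: x = \sum_(y <- ys) y.1%:R *: y.2 -> in_hull U x.
Proof.
elim: ys x => [|[m y] ys IH] x ys_hull; first by rewrite big_nil.
rewrite !big_cons /=; set N := (\sum_(y <- ys) y.1)%N => N_gt0 ex.
have y_hull : in_hull U y := ys_hull (m, y) (mem_head _ _).
have {}IH := IH^~ (fun t t_ys => ys_hull t (@mem_behead _ ((m, y) :: ys) t t_ys)).
case: (posnP N) => [N0|N_gt0'].
  have rest0 : \sum_(t <- ys) t.1%:R *: t.2 = 0 :> vec.
    rewrite big1_seq // => t /andP [_ t_ys].
    by move: N0 => /eqP; rewrite sum_nat_seq_eq0 => /allP /(_ t t_ys) /eqP ->; rewrite scale0r.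
  rewrite N0 addn0 rest0 addr0 in N_gt0 ex.
  by apply: (hull_convex2 (a := m) (c := 0%N) y_hull y_hull); rewrite addn0 // scale0r addr0.
set x' := N%:R^-1 *: \sum_(y <- ys) y.1%:R *: y.2.
have N_neq0 : N%:R != 0 :> R by rewrite pnatr_eq0 -lt0n.
have x'_scaled : N%:R *: x' = \sum_(y <- ys) y.1%:R *: y.2 by rewrite scalerA mulfV ?scale1r.
by apply: (hull_convex2 (a := m) (c := N) y_hull (IH _ N_gt0' x'_scaled)); rewrite // x'_scaled.
Qed.

Lemma hull_srefl_step U lam y i : inD G alpha lam -> inLambda G alpha lam ->
  inLambda G alpha y -> fm y (alpha i) < 0 ->
  in_hull U (lam + y *m srefl i) -> in_hull U (lam + y).
Proof.
move=> lam_dom lam_weight y_weight yi_lt0 hull_ys.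
have aa_gt0 := root_form_gt0 (simple_root i).
have [[a ea] [c ec]] := (lam_weight i, y_weight i).
have a_nat : (`|a|%N)%:R = a%:~R :> R.
  by rewrite natr_absz ger0_norm // -(ler0z R) -ea divr_ge0 ?mulr_ge0 ?ler0n ?lam_dom ?ltW.
have c_lt0 : c%:~R < 0 :> R by rewrite -ec pmulr_llt0 ?invr_gt0 // pmulr_rlt0.
have c_nat : (`|c|%N)%:R = - c%:~R :> R.
  by rewrite natr_absz ltr0_norm ?rmorphN // -(ltrz0 R).
have srefl_coroot (x : vec) d : 2 * fm x (alpha i) / fm (alpha i) (alpha i) = d%:~R ->
    x *m srefl i = x - d%:~R *: alpha i.
  by move=> <-; rewrite /srefl refl_act mulrAC.
have hull_lams : in_hull U (lam *m srefl i + y).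
  by move/(hull_weyl (srefl_weyl i)): hull_ys; rewrite mulmxDl sreflK.
(* With y s_i = y - c alpha_i and lam s_i = lam - a alpha_i, where c < 0 <= a:
   (a - c) (lam + y) = a (lam + y s_i) - c (lam s_i + y). *)
apply: (hull_convex2 (a := `|a|%N) (c := `|c|%N) hull_ys hull_lams).
  by rewrite addn_gt0 orbC absz_gt0; apply/orP; left; apply/eqP => c0; move: c_lt0; rewrite c0 ltxx.
rewrite (srefl_coroot _ _ ec) (srefl_coroot _ _ ea) natrD a_nat c_nat.
by apply/rowP => j; rewrite !mxE; ring.
Qed.

(* Induction on the number of elements of [ws] raising the height of [mu *m w]:
   while [mu *m w] is not dominant, reflecting it in a simple root it pairs
   negatively with raises its height. *)
Lemma hull_dominant_sum lam mu w :
  inD G alpha lam -> inLambda G alpha lam -> inD G alpha mu -> inLambda G alpha mu ->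
  w \in ws -> in_hull (lam + mu) (lam + mu *m w).
Proof.
move=> lam_dom lam_weight mu_dom mu_weight.
pose ht x := fm x rho.
have [m] := ubnP (count (fun w' => ht (mu *m w) < ht (mu *m w')) ws).
elim: m w => // m IHm w /ltnSE count_w w_weyl.
case: (boolP [forall i, 0 <= fm (mu *m w) (alpha i)]) => [/forallP muw_dom|].
  by rewrite dominant_orbit_fixed //; apply: hull_self.
move=> /forallPn [i]; rewrite -ltNge => muwi_lt0.
have wi_weyl : w *m srefl i \in ws by rewrite weylM ?srefl_weyl.
have ht_lt : ht (mu *m w) < ht (mu *m (w *m srefl i)).
  rewrite mulmxA /ht srefl_form_rho ltrDl oppr_gt0 pmulr_llt0 ?simple_form_rho_gt0 //.
  by rewrite pmulr_rlt0 ?divr_gt0 ?ltr0n ?root_form_gt0 ?simple_root.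
apply: (hull_srefl_step lam_dom lam_weight (weight_weyl w_weyl mu_weight) muwi_lt0).
rewrite -mulmxA; apply: (IHm _ _ wi_weyl); apply: leq_trans count_w.
apply: (count_lt_sub (x := w *m srefl i)) => //=; last by rewrite ltxx.
by move=> g; apply: lt_trans ht_lt.
Qed.

Lemma hull_add_orbit A B p w : in_hull A p ->
  inD G alpha A -> inLambda G alpha A -> inD G alpha B -> inLambda G alpha B ->
  w \in ws -> in_hull (A + B) (p + B *m w).
Proof.
move=> [l [l_weyl N_gt0 ep]] A_dom A_weight B_dom B_weight w_weyl.
apply: (hull_convex (ys := [seq (q.1, A *m q.2 + B *m w) | q <- l])).
- move=> _ /mapP [q q_l ->] /=.
  have q_weyl : q.2 \in ws := allP l_weyl q q_l.
  have [q' q'_weyl [q'q qq']] := weylV q_weyl.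
  have := hull_weyl q_weyl (hull_dominant_sum A_dom A_weight B_dom B_weight (weylM w_weyl q'_weyl)).
  by rewrite mulmxDl -!mulmxA q'q mulmx1.
- by rewrite big_map.
rewrite !big_map /= scalerDr ep natr_sum scaler_suml -big_split /=.
by apply: eq_bigr => q _; rewrite scalerDr.
Qed.

Lemma hull_fund_orbits z (T : seq ('I_r * 'M[R]_n)) : inZ G alpha z ->
  all (fun t => t.2 \in ws) T ->
  in_hull (z + \sum_(t <- T) lambda t.1) (z + \sum_(t <- T) lambda t.1 *m t.2).
Proof.
move=> z_center; elim: T => [_|t T IH] /=; first by rewrite !big_nil; apply: hull_self.
move=> /andP [t_weyl /IH T_hull]; have [T_dom T_weight] := dominant_weight_fund_sum T z_center.
rewrite !big_cons !addrA ![z + lambda t.1 + _]addrAC [z + lambda t.1 *m t.2 + _]addrAC.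
exact: hull_add_orbit T_hull T_dom T_weight (dominant_fund _) (weight_fund _) t_weyl.
Qed.

(** * The support of Psi *)

Definition fund_orbit_sum (K y : vec) := exists T : seq ('I_r * 'M[R]_n),
  [/\ all (fun t => t.2 \in ws) T, \sum_(t <- T) lambda t.1 = K &
      y = \sum_(t <- T) lambda t.1 *m t.2].

Lemma fund_orbit_sum0 : fund_orbit_sum 0 0.
Proof. by exists [::]; rewrite !big_nil. Qed.

Lemma fund_orbit_sum_gmul (f g : gring R n) K1 K2 p : p \in gmul f g ->
  (forall q, q \in f -> fund_orbit_sum K1 q.2) -> (forall q, q \in g -> fund_orbit_sum K2 q.2) ->
  fund_orbit_sum (K1 + K2) p.2.
Proof.
move=> /allpairsP [[q1 q2] [q1_f q2_g ep]]; rewrite ep /=.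
move=> /(_ _ q1_f) [T1 [T1_weyl <- ->]] /(_ _ q2_g) [T2 [T2_weyl <- ->]].
by exists (T1 ++ T2); rewrite all_cat T1_weyl T2_weyl !big_cat.
Qed.

Lemma fund_orbit_sum_gexp i m p : p \in gexp (orbsum ws (lambda i)) m ->
  fund_orbit_sum (m%:R *: lambda i) p.2.
Proof.
elim: m p => [|m IH] p /=; first by rewrite inE scale0r => /eqP ->; apply: fund_orbit_sum0.
move/fund_orbit_sum_gmul => /(_ (lambda i) _ _ IH); rewrite -[m.+1]addn1 natrD scalerDl scale1r addrC.
apply=> q /mapP [x + ->]; rewrite mem_undup => /mapP [w w_weyl ->].
by exists [:: (i, w)]; rewrite /= w_weyl !big_seq1.
Qed.

Lemma mem_Psi z (k : 'I_r -> nat) p : p \in Psi ws lambda z k ->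
  exists2 y, fund_orbit_sum (\sum_i (k i)%:R *: lambda i) y & p.2 = z + y.
Proof.
move=> /allpairsP [[q1 q2] [/= + q2_Psi ep]]; rewrite {p}ep mem_seq1 => /eqP -> /=.
exists q2.2 => //; move: q2_Psi; rewrite /Psi_circ -big_enum /=.
elim: (enum 'I_r) q2 => [|i s IH] q /=.
  by rewrite big_nil mem_seq1 => /eqP ->; apply: fund_orbit_sum0.
by rewrite big_cons => /fund_orbit_sum_gmul; apply=> // q'; apply: fund_orbit_sum_gexp.
Qed.

Lemma fund_orbit_sum_lattice K y : fund_orbit_sum K y -> inM L (y - K).
Proof.
move=> [T [T_weyl <- ->]]; rewrite -sumrB.
apply: inM_sum => t t_T; apply/root_lattice_sub/root_lattice_weyl/weight_fund.
exact: (allP T_weyl).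
Qed.

Lemma Psi_dominant_mem z k (vs : seq vec) (a : vec -> int) v :
  uniq vs -> (forall v, v \in vs -> inD G alpha v) ->
  (forall x, coef (Psi ws lambda z k) x = \sum_(v <- vs) a v * coef (orbsum ws v) x) ->
  v \in vs -> a v != 0 -> exists2 p, p \in Psi ws lambda z k & p.2 = v.
Proof.
move=> vs_uniq vs_dom Psi_coef v_vs av_neq0; apply: coef_neq0_mem.
have v_orbit : v \in [seq v *m w | w <- ws] by apply/mapP; exists 1%:M; rewrite ?weyl1 ?mulmx1.
rewrite Psi_coef (bigD1_seq v) //= big1_seq => [|v' /andP [v'_neq v'_vs]].
  by rewrite coef_orbsum v_orbit mulr1 addr0.
rewrite coef_orbsum; case: mapP => [[w w_weyl ev]|]; last by rewrite mulr0.
have v'w_dom : inD G alpha (v' *m w) by rewrite -ev; apply: vs_dom.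
by move: v'_neq; rewrite ev dominant_orbit_fixed ?eqxx //; apply: vs_dom.
Qed.

Lemma Psi_support_in_S u z k p : S u -> inZ G alpha z ->
  u = z + \sum_i (k i)%:R *: lambda i -> p \in Psi ws lambda z k -> S p.2.
Proof.
move=> Su z_center eu /mem_Psi [y /[dup] /fund_orbit_sum_lattice y_lattice [T [T_weyl eK ey]] ->].
have := hull_fund_orbits z_center T_weyl; rewrite eK -eu -ey => y_hull.
apply: (hull_saturated Su y_hull).
have -> : z + y = u + (y - \sum_i (k i)%:R *: lambda i) by rewrite eu addrACA subrr addr0.
exact/inMD/y_lattice/S_lattice.
Qed.

End DominantSupport.

Theorem lemma3p3 (R : realType) (n r : nat) (G L : 'M[R]_n)
  (ws : seq 'M[R]_n) (phi : seq 'rV[R]_n) (alpha lambda : 'I_r -> 'rV[R]_n)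
  (S : 'rV[R]_n -> Prop) (u z : 'rV[R]_n) (k : 'I_r -> nat)
  (vs : seq 'rV[R]_n) (a : 'rV[R]_n -> int) :
  pos_def_sym G ->
  L \in unitmx ->
  finite_refl_group G ws ->
  preserves ws (inM L) ->
  root_system_for G ws phi ->
  simple_system phi alpha ->
  (forall i, inM L (alpha i)) ->
  (forall m, inM L m -> inLambda G alpha m) ->
  fund_weights G alpha lambda ->
  saturated_affine_semigroup L S ->
  W_stable ws S ->
  S u -> inD G alpha u ->
  inZ G alpha z -> u = z + \sum_i (k i)%:R *: lambda i ->
  uniq vs ->
  (forall v, v \in vs -> inD G alpha v /\ inLambda G alpha v) ->
  (forall x, coef (Psi ws lambda z k) x = \sum_(v <- vs) a v * coef (orbsum ws v) x) ->
  forall v, v \in vs -> a v != 0 -> S v.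
Proof.
move=> [Gsym Gpos] _ FG _ RS SS simple_lattice lattice_weight FW S_saturated S_stable.
move=> Su _ z_center eu vs_uniq vs_dom Psi_coef v v_vs av_neq0.
have vs_dom' v' : v' \in vs -> inD G alpha v' by move/vs_dom => [].
have [p p_Psi <-] := Psi_dominant_mem Gsym Gpos RS SS FW FG vs_uniq vs_dom' Psi_coef v_vs av_neq0.
exact: (Psi_support_in_S Gsym Gpos RS SS FW FG simple_lattice lattice_weight
  S_saturated S_stable Su z_center eu p_Psi).
Qed.
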